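(* Let $K$ be an infinite field, let $n\geq 1$, and let $f(x_1,\dots,x_n)=\sum_{\sigma\in S_n}\alpha_\sigma x_{\sigma(1)}\cdots x_{\sigma(n)}$, with $\alpha_\sigma\in K$, be a multilinear polynomial of degree $n$ in noncommuting variables. Let $UT_3=UT_3(K)$ be the algebra of $3\times 3$ upper triangular matrices over $K$, and let $\mathrm{Im}(f)=\{f(a_1,\dots,a_n): a_1,\dots,a_n\in UT_3\}$. Then $\mathrm{Im}(f)$ is equal to one of the following four sets: $UT_3$, $J$, $J^2$, or $\{0\}$.
   Context: $J=J(UT_3)$ denotes the Jacobson radical of $UT_3$, i.e., the set of strictly upper triangular $3\times 3$ matrices over $K$ (matrices whose entries $(i,j)$ are zero whenever $i\geq j$). $J^2$ is the square of $J$, i.e., the set of $3\times 3$ matrices over $K$ whose only possibly nonzero entry is the $(1,3)$ entry. *)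

From mathcomp Require Import all_boot all_order all_algebra all_fingroup.
Set Implicit Arguments. Unset Strict Implicit. Unset Printing Implicit Defensive.
Import GRing.Theory.
Local Open Scope ring_scope.

Definition infinite_field (K : fieldType) : Prop :=
  forall s : seq K, exists x : K, x \notin s.

Definition UT3 (K : fieldType) (A : 'M[K]_3) : Prop :=
  forall i j : 'I_3, (j < i)%N -> A i j = 0.

Definition J3 (K : fieldType) (A : 'M[K]_3) : Prop :=
  forall i j : 'I_3, (j <= i)%N -> A i j = 0.

(* J^2: only the (1,3) entry (0-based (0,2)) may be nonzero. *)
Definition J3sq (K : fieldType) (A : 'M[K]_3) : Prop :=
  forall i j : 'I_3, ~ (val i = 0%N /\ val j = 2%N) -> A i j = 0.

Definition zero_set (K : fieldType) (A : 'M[K]_3) : Prop := A = 0.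

Definition eval_multilin (K : fieldType) (n : nat) (alpha : 'S_n -> K)
  (a : 'I_n -> 'M[K]_3) : 'M[K]_3 :=
  \sum_(s : 'S_n) alpha s *: \prod_(i < n) a (s i).

Definition image_UT3 (K : fieldType) (n : nat) (alpha : 'S_n -> K)
  (M : 'M[K]_3) : Prop :=
  exists a : 'I_n -> 'M[K]_3, (forall i, UT3 (a i)) /\ M = eval_multilin alpha a.

Definition set_eq (K : fieldType) (P Q : 'M[K]_3 -> Prop) : Prop :=
  forall M, P M <-> Q M.

From mathcomp Require Import all_boot all_order all_algebra all_fingroup.
From mathcomp Require Import ring.
From Stdlib Require Import Classical.
Set Implicit Arguments. Unset Strict Implicit. Unset Printing Implicit Defensive.
Import GRing.Theory.
Local Open Scope ring_scope.

(* The diagonal of [f(a_1, ..., a_n)] is [(sum_s alpha_s)] times the product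
   of the diagonals of the [a_i].  If this sum is nonzero, putting [M / sum]
   in one variable and [1] in the others yields every [M].  Otherwise the
   image lies in [J], and it is stable under every map [X |-> P X Q] that is
   a (non-unital) endomorphism of [UT_3]: conjugation by an invertible upper
   triangular matrix, or transplanting a diagonal 2x2 block onto another pair
   of indices.  An element of the image outside [J^2] is thus turned into the
   matrix units [e01], [e12], [e02] (indices from 0), and every element of [J]
   is conjugate to a multiple of one of them, except those whose entries
   (0,1) and (1,2) are both nonzero; an element of that shape is found by a
   polynomial deformation argument, which needs [K] infinite.  If the image
   lies in [J^2], diagonal conjugation gives all of [J^2] or [{0}]. *)

Notation i0 := (@Ordinal 3 0 isT).
Notation i1 := (@Ordinal 3 1 isT).
Notation i2 := (@Ordinal 3 2 isT).

Lemma ord3P (i : 'I_3) : [\/ i = i0, i = i1 | i = i2].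
Proof.
case: i => [[|[|[|//]]] ?]; [constructor 1 | constructor 2 | constructor 3];
  exact: val_inj.
Qed.

Ltac mx3_entrywise :=
  let i := fresh "i" in let j := fresh "j" in
  apply/matrixP => i j; do 3 rewrite ?mxE ?big_ord_recl ?big_ord0;
  case: (ord3P i) => ->; case: (ord3P j) => -> /=.

Section Coordinates.
Variable R : comRingType.

Definition mx3 (a00 a01 a02 a10 a11 a12 a20 a21 a22 : R) : 'M[R]_3 :=
  \matrix_(i, j) nth 0 (nth [::] [:: [:: a00; a01; a02]; [:: a10; a11; a12];
                                      [:: a20; a21; a22]] i) j.

Definition utmx (a b c d e f : R) : 'M[R]_3 := mx3 a b c 0 d e 0 0 f.

Lemma utmx_mul a b c d e f a' b' c' d' e' f' :
  utmx a b c d e f *m utmx a' b' c' d' e' f' =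
  utmx (a * a') (a * b' + b * d') (a * c' + b * e' + c * f')
       (d * d') (d * e' + e * f') (f * f').
Proof. mx3_entrywise; ring. Qed.

Lemma utmx1 : utmx 1 0 0 1 0 1 = 1.
Proof. by mx3_entrywise. Qed.

Lemma utmx0 : utmx 0 0 0 0 0 0 = 0.
Proof. by mx3_entrywise. Qed.

Definition shift_mx : 'M[R]_3 := mx3 0 1 0 0 0 1 0 0 0.
Definition corner_mx : 'M[R]_3 := mx3 1 0 0 0 0 0 0 1 0.

Lemma pid2_utmx a b c d e f :
  pid_mx 2 *m utmx a b c d e f *m pid_mx 2 = utmx a b 0 d 0 0.
Proof. mx3_entrywise; ring. Qed.

Lemma shift_utmx a b c d e f :
  shift_mx *m utmx a b c d e f *m shift_mx^T = utmx d e 0 f 0 0.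
Proof. mx3_entrywise; ring. Qed.

Lemma shiftT_utmx a b c d e f :
  shift_mx^T *m utmx a b c d e f *m shift_mx = utmx 0 0 0 a b d.
Proof. mx3_entrywise; ring. Qed.

Lemma corner_utmx a b c d e f :
  corner_mx *m utmx a b c d e f *m corner_mx^T = utmx a 0 b 0 0 d.
Proof. mx3_entrywise; ring. Qed.

End Coordinates.

Lemma map_utmx (R S : comRingType) (g : {rmorphism R -> S}) a b c d e f :
  map_mx g (utmx a b c d e f) = utmx (g a) (g b) (g c) (g d) (g e) (g f).
Proof. by mx3_entrywise; rewrite ?rmorph0. Qed.

Section UpperTriangular.
Variable K : fieldType.
Implicit Types (A B : 'M[K]_3) (a b c d e f z : K).

Lemma utmx_UT3 a b c d e f : UT3 (utmx a b c d e f).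
Proof.
move=> i j; rewrite mxE.
by case: (ord3P i) => ->; case: (ord3P j) => ->.
Qed.

Lemma UT3_utmxE A : UT3 A ->
  A = utmx (A i0 i0) (A i0 i1) (A i0 i2) (A i1 i1) (A i1 i2) (A i2 i2).
Proof.
move=> utA; apply/matrixP => i j; rewrite mxE.
by case: (ord3P i) => ->; case: (ord3P j) => -> //=; rewrite utA.
Qed.

Lemma UT3_mul A B : UT3 A -> UT3 B -> UT3 (A *m B).
Proof.
by move=> /UT3_utmxE -> /UT3_utmxE ->; rewrite utmx_mul; apply: utmx_UT3.
Qed.

Lemma UT3_mul_diag A B k : UT3 A -> UT3 B -> (A *m B) k k = A k k * B k k.
Proof.
move=> /UT3_utmxE -> /UT3_utmxE ->; rewrite utmx_mul !mxE.
by case: (ord3P k) => ->.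
Qed.

Lemma UT3_add A B : UT3 A -> UT3 B -> UT3 (A + B).
Proof. by move=> utA utB i j ji; rewrite mxE utA // utB // addr0. Qed.

Lemma UT3_scale c A : UT3 A -> UT3 (c *: A).
Proof. by move=> utA i j ji; rewrite mxE utA // mulr0. Qed.

Lemma UT3_0 : UT3 (0 : 'M[K]_3).
Proof. by rewrite -utmx0; apply: utmx_UT3. Qed.

Lemma UT3_1 : UT3 (1 : 'M[K]_3).
Proof. by rewrite -utmx1; apply: utmx_UT3. Qed.

Lemma UT3_prod m (F : 'I_m -> 'M[K]_3) :
  (forall i, UT3 (F i)) -> UT3 (\prod_i F i).
Proof. by move=> utF; apply: big_ind => //; [exact: UT3_1 | exact: UT3_mul]. Qed.

Lemma UT3_prod_diag m (F : 'I_m -> 'M[K]_3) k :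
  (forall i, UT3 (F i)) -> (\prod_i F i) k k = \prod_i F i k k.
Proof.
move=> utF.
suff [] : UT3 (\prod_i F i) /\ (\prod_i F i) k k = \prod_i F i k k by [].
apply: (big_ind2 (fun A d => UT3 A /\ A k k = d)).
- by split; [exact: UT3_1 | rewrite mxE eqxx].
- move=> A d B d' [utA <-] [utB <-].
  by rewrite -mulmxE UT3_mul_diag //; split; first exact: UT3_mul.
- by move=> i _; split.
Qed.

Lemma J3_UT3 A : J3 A -> UT3 A.
Proof. by move=> jA i j /ltnW; apply: jA. Qed.

Lemma J3_utmxE A : J3 A -> A = utmx 0 (A i0 i1) (A i0 i2) 0 (A i1 i2) 0.
Proof.
move=> jA; rewrite {1}(UT3_utmxE (J3_UT3 jA)).
by rewrite (jA i0 i0) ?(jA i1 i1) ?(jA i2 i2).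
Qed.

Lemma J3sq_utmxE A : J3sq A -> A = utmx 0 0 (A i0 i2) 0 0 0.
Proof.
move=> sA; apply/matrixP => i j; rewrite mxE.
by case: (ord3P i) => ->; case: (ord3P j) => -> //=; rewrite sA //; case.
Qed.

Lemma utmx_J3sq z : J3sq (utmx 0 0 z 0 0 0).
Proof.
move=> i j; rewrite mxE.
by case: (ord3P i) => ->; case: (ord3P j) => -> //= [].
Qed.

End UpperTriangular.

Definition UT3_endo (K : fieldType) (P Q : 'M[K]_3) : Prop :=
  (forall A, UT3 A -> UT3 (P *m A *m Q)) /\
  forall A B, UT3 A -> UT3 B ->
    P *m (A *m B) *m Q = (P *m A *m Q) *m (P *m B *m Q).

Section Endomorphisms.
Variable K : fieldType.
Implicit Types (A B P Q : 'M[K]_3) (a b c d e f : K).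

Lemma UT3_endo_prod P Q m (F : 'I_m -> 'M[K]_3) : (0 < m)%N ->
  UT3_endo P Q -> (forall i, UT3 (F i)) ->
  \prod_i (P *m F i *m Q) = P *m (\prod_i F i) *m Q.
Proof.
case: m F => // m F _ [_ endoM].
elim: m F => [|m IH] F utF; first by rewrite !big_ord1.
rewrite big_ord_recl IH // [in RHS]big_ord_recl -!mulmxE endoM //.
exact: UT3_prod.
Qed.

Lemma UT3_endo_conj P Q : UT3 P -> UT3 Q -> Q *m P = 1 -> UT3_endo P Q.
Proof.
move=> utP utQ QP; split=> [A utA | A B _ _].
  by apply: UT3_mul => //; apply: UT3_mul.
by rewrite !mulmxA -(mulmxA _ Q P) QP mulmx1.
Qed.

Lemma UT3_endo_utmx P Q :
  (forall a b c d e f, UT3 (P *m utmx a b c d e f *m Q)) ->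
  (forall a b c d e f a' b' c' d' e' f',
     P *m utmx (a * a') (a * b' + b * d') (a * c' + b * e' + c * f')
                (d * d') (d * e' + e * f') (f * f') *m Q =
     (P *m utmx a b c d e f *m Q) *m (P *m utmx a' b' c' d' e' f' *m Q)) ->
  UT3_endo P Q.
Proof.
move=> utPQ mulPQ; split=> [A /UT3_utmxE -> // |].
by move=> A B /UT3_utmxE -> /UT3_utmxE ->; rewrite utmx_mul.
Qed.

Lemma UT3_endo_pid2 : UT3_endo (pid_mx 2 : 'M[K]_3) (pid_mx 2).
Proof.
apply: UT3_endo_utmx => *; rewrite !pid2_utmx; first exact: utmx_UT3.
by rewrite utmx_mul; congr utmx; ring.
Qed.

Lemma UT3_endo_shift : UT3_endo (shift_mx K) (shift_mx K)^T.
Proof.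
apply: UT3_endo_utmx => *; rewrite !shift_utmx; first exact: utmx_UT3.
by rewrite utmx_mul; congr utmx; ring.
Qed.

Lemma UT3_endo_shiftT : UT3_endo (shift_mx K)^T (shift_mx K).
Proof.
apply: UT3_endo_utmx => *; rewrite !shiftT_utmx; first exact: utmx_UT3.
by rewrite utmx_mul; congr utmx; ring.
Qed.

Lemma UT3_endo_corner : UT3_endo (corner_mx K) (corner_mx K)^T.
Proof.
apply: UT3_endo_utmx => *; rewrite !corner_utmx; first exact: utmx_UT3.
by rewrite utmx_mul; congr utmx; ring.
Qed.

End Endomorphisms.

Lemma infinite_field_nonroot (K : fieldType) (p : {poly K}) :
  infinite_field K -> p != 0 -> exists x, ~~ root p x.
Proof.
move=> infK p0.
have [s us ss] : exists2 s : seq K, uniq s & size s = size p.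
  elim: (size p) => [|k [s us ss]]; first by exists [::].
  by have [x xs] := infK s; exists (x :: s); rewrite /= ?xs ?ss.
have /allPn[x _ px] : ~~ all (root p) s.
  by apply/negP => /(max_poly_roots p0)/(_ us); rewrite ss ltnn.
by exists x.
Qed.

Section Image.
Variables (K : fieldType) (n : nat) (alpha : 'S_n -> K).
Local Notation f := (eval_multilin alpha).
Local Notation im := (image_UT3 alpha).
Local Notation S := (\sum_s alpha s).
Implicit Types (a : 'I_n -> 'M[K]_3) (A M T P Q : 'M[K]_3) (x y z c : K).

Lemma eq_eval_multilin a a' : a =1 a' -> f a = f a'.
Proof. by move=> eq_a; apply: eq_bigr => s _; under eq_bigr do rewrite eq_a. Qed.

Lemma eval_multilin_UT3 a : (forall i, UT3 (a i)) -> UT3 (f a).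
Proof.
move=> uta; apply: big_ind => [|A B|s _]; [exact: UT3_0 | exact: UT3_add |].
by apply/UT3_scale/UT3_prod.
Qed.

Lemma image_UT3_sub M : im M -> UT3 M.
Proof. by case=> a [uta ->]; apply: eval_multilin_UT3. Qed.

Lemma eval_multilin_diag a k : (forall i, UT3 (a i)) ->
  f a k k = S * \prod_i a i k k.
Proof.
move=> uta; rewrite summxE mulr_suml; apply: eq_bigr => s _.
rewrite mxE UT3_prod_diag //; congr (_ * _).
by rewrite [RHS](reindex_inj (@perm_inj _ s)).
Qed.

Lemma image_UT3_sub_J3 M : S = 0 -> im M -> J3 M.
Proof.
move=> S0 [a [uta ->]] i j; rewrite leq_eqVlt => /orP[/eqP/val_inj ->|].
  by rewrite eval_multilin_diag // S0 mul0r.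
exact: eval_multilin_UT3.
Qed.

Lemma horner_eval_multilin (B : 'I_n -> 'M[{poly K}]_3) x :
  map_mx (horner_eval x) (\sum_s (alpha s)%:P *: \prod_i B (s i)) =
  f (fun i => map_mx (horner_eval x) (B i)).
Proof.
rewrite map_mx_sum; apply: eq_bigr => s _.
by rewrite map_mxZ rmorph_prod /= horner_evalE hornerC.
Qed.

Hypothesis n_gt0 : (0 < n)%N.

Lemma image_UT3_0 : im 0.
Proof.
exists (fun _ => 0); split=> [i|]; first exact: UT3_0.
have prod0 m : (0 < m)%N -> \prod_(i < m) (0 : 'M[K]_3) = 0.
  by case: m => // m _; rewrite big_ord_recl mul0r.
by rewrite /eval_multilin big1 // => s _; rewrite prod0 // scaler0.
Qed.

Lemma image_UT3_full M : S != 0 -> UT3 M -> im M.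
Proof.
move=> S_neq0 utM; pose j0 := Ordinal n_gt0.
exists (fun i => if i == j0 then S^-1 *: M else 1); split.
  by move=> i; case: ifP => _; [exact: UT3_scale | exact: UT3_1].
have prod_slot (s : 'S_n) :
    \prod_i (if s i == j0 then S^-1 *: M else 1) = S^-1 *: M.
  rewrite (eq_bigr (fun i => if i == s^-1%g j0 then S^-1 *: M else 1)) => [|i _].
    by rewrite -big_mkcond big_pred1_eq.
  by rewrite -{1}(permKV s j0) (inj_eq perm_inj).
rewrite /eval_multilin (eq_bigr (fun s => alpha s *: (S^-1 *: M))) => [|s _].
  by rewrite -scaler_suml scalerA mulfV // scale1r.
by rewrite prod_slot.
Qed.

(* [n > 0] matters: the map [X |-> P X Q] need not send [1] to [1]. *)
Lemma eval_multilin_endo P Q a : UT3_endo P Q -> (forall i, UT3 (a i)) ->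
  f (fun i => P *m a i *m Q) = P *m f a *m Q.
Proof.
move=> endoPQ uta; rewrite /eval_multilin mulmx_sumr mulmx_suml.
apply: eq_bigr => s _; rewrite -scalemxAr -scalemxAl.
by rewrite (UT3_endo_prod n_gt0 endoPQ (fun i => uta (s i))).
Qed.

Lemma image_UT3_endo P Q M : UT3_endo P Q -> im M -> im (P *m M *m Q).
Proof.
move=> endoPQ [a [uta ->]]; exists (fun i => P *m a i *m Q).
by split=> [i|]; [apply: endoPQ.1 | rewrite eval_multilin_endo].
Qed.

Lemma image_UT3_pid2 (a b c d e g : K) :
  im (utmx a b c d e g) -> im (utmx a b 0 d 0 0).
Proof. by move/(image_UT3_endo (UT3_endo_pid2 K)); rewrite pid2_utmx. Qed.

Lemma image_UT3_shift (a b c d e g : K) :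
  im (utmx a b c d e g) -> im (utmx d e 0 g 0 0).
Proof. by move/(image_UT3_endo (UT3_endo_shift K)); rewrite shift_utmx. Qed.

Lemma image_UT3_shiftT (a b c d e g : K) :
  im (utmx a b c d e g) -> im (utmx 0 0 0 a b d).
Proof. by move/(image_UT3_endo (UT3_endo_shiftT K)); rewrite shiftT_utmx. Qed.

Lemma image_UT3_corner (a b c d e g : K) :
  im (utmx a b c d e g) -> im (utmx a 0 b 0 0 d).
Proof. by move/(image_UT3_endo (UT3_endo_corner K)); rewrite corner_utmx. Qed.

Lemma image_UT3_similar (p q r s : K) M T : p != 0 -> r != 0 ->
  T *m utmx p q 0 r s 1 = utmx p q 0 r s 1 *m M -> im M -> im T.
Proof.
move=> p0 r0 TP imM; set P := utmx p q 0 r s 1.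
pose Q := utmx p^-1 (- q / (p * r)) (q * s / (p * r)) r^-1 (- s / r) 1.
have QP : Q *m P = 1.
  by rewrite utmx_mul -utmx1; congr utmx; field; rewrite ?p0 ?r0.
have PQ : P *m Q = 1.
  by rewrite utmx_mul -utmx1; congr utmx; field; rewrite ?p0 ?r0.
have -> : T = P *m M *m Q by rewrite -TP -mulmxA PQ mulmx1.
by apply: image_UT3_endo imM; apply: UT3_endo_conj QP; apply: utmx_UT3.
Qed.

Lemma image_UT3_e02_orbit c z :
  c != 0 -> im (utmx 0 0 c 0 0 0) -> im (utmx 0 0 z 0 0 0).
Proof.
have [-> _ _|z0 c0] := eqVneq z 0; first by rewrite utmx0; exact: image_UT3_0.
apply: (image_UT3_similar (q := 0) (s := 0)
  (mulf_neq0 z0 (invr_neq0 c0)) (oner_neq0 K)).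
by rewrite !utmx_mul; congr utmx; field.
Qed.

Lemma image_UT3_e01_orbit c x z :
  c != 0 -> x != 0 -> im (utmx 0 c 0 0 0 0) -> im (utmx 0 x z 0 0 0).
Proof.
move=> c0 x0; apply: (image_UT3_similar (q := 0) (s := - z / x)
  (mulf_neq0 x0 (invr_neq0 c0)) (oner_neq0 K)).
by rewrite !utmx_mul; congr utmx; field; rewrite ?c0 ?x0.
Qed.

Lemma image_UT3_e12_orbit c y z :
  c != 0 -> y != 0 -> im (utmx 0 0 0 0 c 0) -> im (utmx 0 0 z 0 y 0).
Proof.
move=> c0 y0; apply: (image_UT3_similar (q := z / c) (s := 0)
  (oner_neq0 K) (mulf_neq0 y0 (invr_neq0 c0))).
by rewrite !utmx_mul; congr utmx; field.
Qed.

Lemma image_UT3_generic_orbit x0 y0 z0 x y z :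
  x0 != 0 -> y0 != 0 -> x != 0 -> y != 0 ->
  im (utmx 0 x0 z0 0 y0 0) -> im (utmx 0 x z 0 y 0).
Proof.
move=> nx0 ny0 nx ny; pose r := y / y0; pose p := x * r / x0.
have r0 : r != 0 by rewrite mulf_neq0 ?invr_eq0.
have p0 : p != 0 by rewrite !mulf_neq0 ?invr_eq0.
apply: (image_UT3_similar (q := (z - p * z0) / y0) (s := 0) p0 r0).
by rewrite !utmx_mul; congr utmx; rewrite /p /r; field; rewrite ?nx0 ?ny0.
Qed.

Lemma eval_multilin_entry01 a : (forall i, UT3 (a i)) ->
  f a i0 i1 = f (fun i => pid_mx 2 *m a i *m pid_mx 2) i0 i1.
Proof.
move=> uta; rewrite eval_multilin_endo //; last exact: UT3_endo_pid2.
by rewrite (UT3_utmxE (eval_multilin_UT3 uta)) pid2_utmx !mxE.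
Qed.

Lemma eval_multilin_entry12 a : (forall i, UT3 (a i)) ->
  f a i1 i2 = f (fun i => shift_mx K *m a i *m (shift_mx K)^T) i0 i1.
Proof.
move=> uta; rewrite eval_multilin_endo //; last exact: UT3_endo_shift.
by rewrite (UT3_utmxE (eval_multilin_UT3 uta)) shift_utmx !mxE.
Qed.

(* [B x] is chosen so that [f (B 0)] has the (0,1) entry of [f a] at (0,1)
   and [f (B 1)] has it at (1,2); both entries of [f (B x)] are polynomials
   in [x], so some [x] makes both nonzero. *)
Lemma image_UT3_entries_neq0 M : infinite_field K -> im M -> M i0 i1 != 0 ->
  exists2 M', im M' & (M' i0 i1 != 0) && (M' i1 i2 != 0).
Proof.
move=> infK [a [uta ->]] fa_neq0.
pose p k := a k i0 i0; pose q k := a k i0 i1; pose r k := a k i1 i1.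
pose B x k := utmx (p k) (q k) 0 (r k + x * (p k - r k)) (q k) (r k).
have utB x k : UT3 (B x k) by apply: utmx_UT3.
have B0 : f (B 0) i0 i1 = f a i0 i1.
  rewrite (eval_multilin_entry01 (utB 0)) (eval_multilin_entry01 uta).
  congr (_ _ i0 i1); apply: eq_eval_multilin => k.
  by rewrite (UT3_utmxE (uta k)) !pid2_utmx mul0r addr0.
have B1 : f (B 1) i1 i2 = f a i0 i1.
  rewrite (eval_multilin_entry12 (utB 1)) (eval_multilin_entry01 uta).
  congr (_ _ i0 i1); apply: eq_eval_multilin => k.
  by rewrite (UT3_utmxE (uta k)) shift_utmx pid2_utmx mul1r addrC subrK.
pose Bp k := utmx (p k)%:P (q k)%:P 0 ((r k)%:P + 'X * (p k - r k)%:P)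
                  (q k)%:P (r k)%:P.
pose G := \sum_s (alpha s)%:P *: \prod_i Bp (s i).
have G_B x : map_mx (horner_eval x) G = f (B x).
  rewrite horner_eval_multilin; apply: eq_eval_multilin => k.
  by rewrite map_utmx /= !horner_evalE !hornerE.
have G_horner x i j : (G i j).[x] = f (B x) i j by rewrite -G_B mxE.
have G01 : G i0 i1 != 0.
  by apply: contraNneq fa_neq0 => G0; rewrite -B0 -G_horner G0 horner0.
have G12 : G i1 i2 != 0.
  by apply: contraNneq fa_neq0 => G0; rewrite -B1 -G_horner G0 horner0.
have [x] := infinite_field_nonroot infK (mulf_neq0 G01 G12).
rewrite rootE hornerM !G_horner mulf_eq0 negb_or => nz.
by exists (f (B x)); first by exists (B x).
Qed.

Lemma image_UT3_e01 M : S = 0 -> im M -> ~ J3sq M ->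
  exists2 c, c != 0 & im (utmx 0 c 0 0 0 0).
Proof.
move=> S0 imM nsqM; have eM := J3_utmxE (image_UT3_sub_J3 S0 imM).
rewrite eM in imM.
have [x0|x0] := eqVneq (M i0 i1) 0; last first.
  by exists (M i0 i1) => //; apply: image_UT3_pid2 imM.
have [y0|y0] := eqVneq (M i1 i2) 0.
  by case: nsqM; rewrite eM x0 y0; apply: utmx_J3sq.
by exists (M i1 i2) => //; move: imM; rewrite x0 => /image_UT3_shift.
Qed.

Lemma J3_sub_image_UT3 M T : infinite_field K -> S = 0 ->
  im M -> ~ J3sq M -> J3 T -> im T.
Proof.
move=> infK S0 imM nsqM /J3_utmxE ->.
have [c c0 im01] := image_UT3_e01 S0 imM nsqM.
have [x0|x0] := eqVneq (T i0 i1) 0; have [y0|y0] := eqVneq (T i1 i2) 0.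
- by rewrite x0 y0; apply: image_UT3_e02_orbit c0 (image_UT3_corner im01).
- by rewrite x0; apply: image_UT3_e12_orbit c0 y0 (image_UT3_shiftT im01).
- by rewrite y0; apply: image_UT3_e01_orbit c0 x0 im01.
have c01 : utmx 0 c 0 0 0 0 i0 i1 != 0 by rewrite mxE.
have [M' imM'] := image_UT3_entries_neq0 infK im01 c01.
have eM' := J3_utmxE (image_UT3_sub_J3 S0 imM').
rewrite eM' in imM'; case/andP=> x0' y0'.
exact: image_UT3_generic_orbit x0' y0' x0 y0 imM'.
Qed.

Lemma J3sq_sub_image_UT3 M T : im M -> J3sq M -> M != 0 -> J3sq T -> im T.
Proof.
move=> imM /J3sq_utmxE eM M_neq0 /J3sq_utmxE ->.
have z0 : M i0 i2 != 0 by apply: contraNneq M_neq0 => z0; rewrite eM z0 utmx0.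
by rewrite eM in imM; apply: image_UT3_e02_orbit z0 imM.
Qed.

End Image.

Theorem mainTheorem1 (K : fieldType) (hK : infinite_field K) (n : nat)
  (hn : (1 <= n)%N) (alpha : 'S_n -> K) :
  set_eq (image_UT3 alpha) (@UT3 K) \/
  set_eq (image_UT3 alpha) (@J3 K) \/
  set_eq (image_UT3 alpha) (@J3sq K) \/
  set_eq (image_UT3 alpha) (@zero_set K).
Proof.
have [S0|S_neq0] := eqVneq (\sum_s alpha s) 0; last first.
  by left=> M; split; [apply: image_UT3_sub | apply: image_UT3_full].
right; have [[M imM nsqM]|im_sq] :=
  classic (exists2 M, image_UT3 alpha M & ~ J3sq M).
  left=> T; split; first exact: image_UT3_sub_J3.
  exact: J3_sub_image_UT3 hK S0 imM nsqM.
have {}im_sq M : image_UT3 alpha M -> J3sq M.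
  by move=> imM; apply: NNPP => nsqM; apply: im_sq; exists M.
right; have [[M imM M_neq0]|im_0] :=
  classic (exists2 M, image_UT3 alpha M & M != 0).
  left=> T; split; first exact: im_sq.
  exact: J3sq_sub_image_UT3 imM (im_sq M imM) M_neq0.
right=> T; split=> [imT|->]; last exact: image_UT3_0.
by apply/eqP; apply: contra_notT im_0 => T_neq0; exists T.
Qed.
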